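(* Let $(\mathcal{E},\mathcal{L},\mathcal{B})$ be a normal labelled space and $R$ a unital commutative ring. In $L_R(\mathcal{E},\mathcal{L},\mathcal{B})$: (i) if $A\in\mathcal{B}$ is non-empty then $p_A\neq 0$; (ii) if $r\in R$, $A\in\mathcal{B}$ and $rp_A=0$, then $r=0$ or $A=\emptyset$; (iii) if $A_1,\dots,A_n\in\mathcal{B}$ are non-empty and pairwise disjoint, $r_1,\dots,r_n\in R$ and $\sum_i r_ip_{A_i}=0$, then $r_i=0$ for all $i$; (iv) if $\alpha,\beta\in\mathcal{L}^*(\mathcal{E})$, $A\in\mathcal{B}$ with $A\cap r(\alpha)\cap r(\beta)\neq\emptyset$, and $0\neq r\in R$, then $rs_\alpha p_A s_\beta^*\neq 0$.
   Context: A graph $\mathcal{E}=(\mathcal{E}^0,\mathcal{E}^1,r,s)$ consists of a set of vertices $\mathcal{E}^0$, a set of edges $\mathcal{E}^1$ and maps $r,s:\mathcal{E}^1\to\mathcal{E}^0$. A finite path is a sequence $\lambda=\lambda_1\cdots\lambda_n$ of edges with $r(\lambda_i)=s(\lambda_{i+1})$, with $s(\lambda)=s(\lambda_1)$, $r(\lambda)=r(\lambda_n)$. A labelled graph $(\mathcal{E},\mathcal{L})$ is a graph with a surjective map $\mathcal{L}:\mathcal{E}^1\to\mathcal{A}$ onto a set $\mathcal{A}$ (the alphabet), extended to paths by $\mathcal{L}(\lambda)=\mathcal{L}(\lambda_1)\cdots\mathcal{L}(\lambda_n)$. $\mathcal{L}^*(\mathcal{E})$ denotes the set of words $\mathcal{L}(\lambda)$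 for finite paths $\lambda$ of positive length, together with the empty word $\omega$; $|\alpha|$ is the length of a word. For $A\subseteq\mathcal{E}^0$ and $\alpha\in\mathcal{L}^*(\mathcal{E})$, $r(A,\alpha)=\{r(\lambda)\mid \mathcal{L}(\lambda)=\alpha,\ s(\lambda)\in A\}$ if $\alpha\neq\omega$ and $r(A,\omega)=A$; $r(\alpha)=r(\mathcal{E}^0,\alpha)$; $\mathcal{L}(A\mathcal{E}^1)=\{a\in\mathcal{A}\mid r(A,a)\neq\emptyset\}$. A labelled space $(\mathcal{E},\mathcal{L},\mathcal{B})$ is a labelled graph with a family $\mathcal{B}$ of subsets of $\mathcal{E}^0$ closed under finite intersections and finite unions, containing $r(\alpha)$ for all non-empty $\alpha\in\mathcal{L}^*(\mathcal{E})$, and with $r(A,\alpha)\in\mathcal{B}$ for all $A\in\mathcal{B}$, $\alpha\in\mathcal{L}^*(\mathcal{E})$. It is normal if additionally $r(A\cap B,\alpha)=r(A,\alpha)\cap r(B,\alpha)$ for all $A,B\in\mathcal{B}$ and non-empty $\alpha$, and $\mathcal{B}$ is closed under relative complements. A non-empty $A\in\mathcal{B}$ is regular if $0<|\mathcal{L}(B\mathcal{E}^1)|<\infty$ for every non-empty $B\in\mathcal{B}$ with $B\subseteq A$; $\mathcal{B}_{reg}$ is the set of regular sets together with $\emptyset$. For $\alpha\in\mathcal{L}^*(\mathcal{E})$, $\mathcal{B}_\alpha=\{A\in\mathcal{B}\mid A\subseteq r(\alpha)\}$. The Leavitt labelled path algebra $L_R(\mathcal{E},\mathcal{L},\mathcal{B})$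 (for a normal labelled space and a unital commutative ring $R$) is the universal $R$-algebra generated by $\{p_A\mid A\in\mathcal{B}\}\cup\{s_a,s_a^*\mid a\in\mathcal{A}\}$ subject to: (i) $p_{A\cap B}=p_Ap_B$, $p_{A\cup B}=p_A+p_B-p_{A\cap B}$, $p_\emptyset=0$; (ii) $p_As_a=s_ap_{r(A,a)}$ and $s_a^*p_A=p_{r(A,a)}s_a^*$; (iii) $s_a^*s_a=p_{r(a)}$ and $s_b^*s_a=0$ for $b\neq a$; (iv) $s_as_a^*s_a=s_a$, $s_a^*s_as_a^*=s_a^*$; (v) $p_A=\sum_{a\in\mathcal{L}(A\mathcal{E}^1)}s_ap_{r(A,a)}s_a^*$ for every $A\in\mathcal{B}_{reg}$. For $\alpha=a_1\cdots a_n$ put $s_\alpha=s_{a_1}\cdots s_{a_n}$, $s_\alpha^*=s_{a_n}^*\cdots s_{a_1}^*$, and by convention $s_\omega p_A s_\omega^*=p_A$, $s_\omega p_A s_\beta^*=p_As_\beta^*$, etc. *)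

From HB Require Import structures.
From mathcomp Require Import all_boot all_algebra.
From mathcomp Require Import boolp classical_sets cardinality.
From Stdlib Require List.
Set Implicit Arguments. Unset Strict Implicit. Unset Printing Implicit Defensive.
Import GRing.Theory.
Local Open Scope classical_set_scope.
Local Open Scope ring_scope.

(* Graph E = (E^0 = V, E^1 = Ed, rng, src) with labels lab : Ed -> Alph. *)
Section LabelledSpaces.
Variables (V Ed Alph : Type) (src rng : Ed -> V) (lab : Ed -> Alph).

Fixpoint linked (e : Ed) (l : seq Ed) : Prop :=
  match l with
  | [::] => True
  | e' :: l' => rng e = src e' /\ linked e' l'
  end.

(* a finite path of positive length: e0 :: l *)
Definition is_path (e0 : Ed) (l : seq Ed) : Prop := linked e0 l.

Definition in_Lstar (w : seq Alph) : Prop :=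
  w = [::] \/ exists e0 l, is_path e0 l /\ map lab (e0 :: l) = w.

Definition rset (A : set V) (w : seq Alph) : set V :=
  match w with
  | [::] => A
  | _ :: _ => [set v | exists e0 l, is_path e0 l /\ map lab (e0 :: l) = w
                        /\ A (src e0) /\ rng (last e0 l) = v]
  end.

Definition rword (w : seq Alph) : set V := rset setT w.

Definition out_labels (A : set V) : set Alph := [set a | rset A [:: a] != set0].

Definition labelled_space (B : set (set V)) : Prop :=
  [/\ (forall A C, B A -> B C -> B (A `&` C)),
      (forall A C, B A -> B C -> B (A `|` C)),
      (forall w, in_Lstar w -> w <> [::] -> B (rword w))
    & (forall A w, B A -> in_Lstar w -> B (rset A w))].

Definition normal_labelled_space (B : set (set V)) : Prop :=
  [/\ labelled_space B,
      (forall A C w, B A -> B C -> in_Lstar w -> w <> [::] ->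
          rset (A `&` C) w = rset A w `&` rset C w)
    & (forall A C, B A -> B C -> B (A `\` C))].

Definition regular (B : set (set V)) (A : set V) : Prop :=
  [/\ B A, A != set0 &
      forall C, B C -> C != set0 -> C `<=` A ->
        out_labels C != set0 /\ finite_set (out_labels C)].

Definition in_Breg (B : set (set V)) (A : set V) : Prop :=
  regular B A \/ A = set0.

Section Rep.
Variables (R : comNzRingType) (B : set (set V)).

Definition LLPA_rep (X : algType R) (p : set V -> X) (s ss : Alph -> X) : Prop :=
  [/\ (forall A C, B A -> B C ->
         p (A `&` C) = p A * p C /\ p (A `|` C) = p A + p C - p (A `&` C)),
      p set0 = 0 /\
      (forall A a, B A ->
         p A * s a = s a * p (rset A [:: a]) /\ ss a * p A = p (rset A [:: a]) * ss a),
      (forall a b, ss a * s a = p (rword [:: a]) /\ (b <> a -> ss b * s a = 0)),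
      (forall a, s a * ss a * s a = s a /\ ss a * s a * ss a = ss a)
    & (forall A, in_Breg B A -> forall l : seq Alph, List.NoDup l ->
         (forall a, List.In a l <-> out_labels A a) ->
         p A = \sum_(a <- l) s a * p (rset A [:: a]) * ss a)].

(* An element of L_R(E,L,B), given as a (noncommutative) R-algebra expression
   in the generators p_A, s_a, s_a^*; it is zero in the universal algebra
   L_R(E,L,B) iff it vanishes under every family satisfying the relations. *)
Definition LLPA_expr :=
  forall X : algType R, (set V -> X) -> (Alph -> X) -> (Alph -> X) -> X.

Definition LLPA_eq0 (x : LLPA_expr) : Prop :=
  forall (X : algType R) (p : set V -> X) (s ss : Alph -> X),
    LLPA_rep p s ss -> x X p s ss = 0.

End Rep.

(* s_alpha and s_beta^* (with s_omega = 1, so s_omega p_A s_beta^* = p_A s_beta^* ) *)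
Definition s_word (R : pzRingType) (s : Alph -> R) (w : seq Alph) : R :=
  \prod_(a <- w) s a.
Definition s_word_star (R : pzRingType) (ss : Alph -> R) (w : seq Alph) : R :=
  \prod_(a <- rev w) ss a.

End LabelledSpaces.

From HB Require Import structures.
From mathcomp Require Import all_boot all_algebra.
From mathcomp Require Import boolp classical_sets cardinality filter.
From mathcomp Require Import zify.
Set Implicit Arguments. Unset Strict Implicit. Unset Printing Implicit Defensive.
Import GRing.Theory.
Local Open Scope classical_set_scope.
Local Open Scope ring_scope.

(* Everything is read off one concrete representation.  L_R acts on R-valued
   functions of "traces": a word, read letter by letter, together with a
   character of B at every step telling which sets contain the current
   position.  p_A multiplies by the indicator of "A holds at step 0", s_a
   shifts a trace starting with a, and s_a^* prepends a.  Every non-empty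
   A in B holds at step 0 of some admissible trace: if some vertex reachable
   from A lies in no regular set, the finite path to it gives the trace;
   otherwise every r(A, w) can be extended by a letter, and an ultrafilter
   along the resulting infinite word provides the characters.  Evaluating at
   such a trace gives (i)-(iii), and (iv) reduces to (ii) since
   s_alpha^* (s_alpha p_A s_beta^* ) s_beta = p_(A ∩ r(alpha) ∩ r(beta)). *)

(** * Linear endomorphisms of a function space *)

Section LinearEndomorphisms.
Variables (R : comNzRingType) (T : Type).

Definition linear_on (F : (T -> R) -> T -> R) :=
  forall k f g, F (fun x => k * f x + g x) = (fun x => k * F f x + F g x).

(* The point [t0] is only an index: it witnesses [1 != 0], which lets the ring
   structure below be a canonical instance. *)
Record endo (t0 : T) :=
  Endo {endo_fun :> (T -> R) -> T -> R; endo_linear : linear_on endo_fun}.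

Variable t0 : T.
Local Notation L := (endo t0).

Lemma endo_eq (F G : L) : (forall f x, F f x = G f x) -> F = G.
Proof.
case: F G => [F linF] [G linG] /= FG.
have eFG : F = G by apply/funext => f; apply/funext => x; exact: FG.
by subst G; congr Endo; exact: Prop_irrelevance.
Qed.

HB.instance Definition _ := gen_eqMixin L.
HB.instance Definition _ := gen_choiceMixin L.

Lemma endoD (F : L) f g : F (fun x => f x + g x) = (fun x => F f x + F g x).
Proof.
have := endo_linear F 1 f g.
by under eq_fun do rewrite mul1r; under [in RHS]eq_fun do rewrite mul1r.
Qed.

Lemma endoZ (F : L) k f : F (fun x => k * f x) = (fun x => k * F f x).
Proof.
have F0 : F (fun=> 0) = (fun=> 0).
  apply/funext => x; apply/(@addrI _ (F (fun=> 0) x)); rewrite addr0.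
  by have /(congr1 (@^~ x)) <- := endoD F (fun=> 0) (fun=> 0); rewrite addr0.
have := endo_linear F k f (fun=> 0); rewrite F0.
by under eq_fun do rewrite addr0; under [in RHS]eq_fun do rewrite addr0.
Qed.

Lemma linear_zero : linear_on (fun _ _ => 0).
Proof. by move=> k f g; apply/funext => x; rewrite mulr0 addr0. Qed.

Lemma linear_add (F G : L) : linear_on (fun f x => F f x + G f x).
Proof. by move=> k f g; apply/funext => x; rewrite !endo_linear mulrDr addrACA. Qed.

Lemma linear_opp (F : L) : linear_on (fun f x => - F f x).
Proof. by move=> k f g; apply/funext => x; rewrite endo_linear opprD mulrN. Qed.

Lemma linear_id : linear_on id.
Proof. by []. Qed.

Lemma linear_comp (F G : L) : linear_on (fun f => F (G f)).
Proof. by move=> k f g; rewrite !endo_linear. Qed.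

Lemma linear_scale k (F : L) : linear_on (fun f x => k * F f x).
Proof. by move=> c f g; apply/funext => x; rewrite endo_linear mulrDr mulrCA. Qed.

Definition endo_zero := Endo t0 linear_zero.
Definition endo_add F G := Endo t0 (linear_add F G).
Definition endo_opp F := Endo t0 (linear_opp F).
Definition endo_one := Endo t0 linear_id.
Definition endo_mul F G := Endo t0 (linear_comp F G).
Definition endo_scale k F := Endo t0 (linear_scale k F).

Lemma endo_addA : associative endo_add.
Proof. by move=> F G H; apply: endo_eq => f x; rewrite /= addrA. Qed.
Lemma endo_addC : commutative endo_add.
Proof. by move=> F G; apply: endo_eq => f x; rewrite /= addrC. Qed.
Lemma endo_add0 : left_id endo_zero endo_add.
Proof. by move=> F; apply: endo_eq => f x; rewrite /= add0r. Qed.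
Lemma endo_addN : left_inverse endo_zero endo_opp endo_add.
Proof. by move=> F; apply: endo_eq => f x; rewrite /= addNr. Qed.

HB.instance Definition _ :=
  GRing.isZmodule.Build L endo_addA endo_addC endo_add0 endo_addN.

Lemma endo_mulA : associative endo_mul. Proof. by move=> *; exact: endo_eq. Qed.
Lemma endo_mul1 : left_id endo_one endo_mul. Proof. by move=> *; exact: endo_eq. Qed.
Lemma endo_mulr1 : right_id endo_one endo_mul. Proof. by move=> *; exact: endo_eq. Qed.
Lemma endo_mulDl : left_distributive endo_mul +%R.
Proof. by move=> *; exact: endo_eq. Qed.
Lemma endo_mulDr : right_distributive endo_mul +%R.
Proof. by move=> F G H; apply: endo_eq => f x; rewrite /= endoD. Qed.
Lemma endo_one_neq0 : endo_one != 0.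
Proof.
by apply/eqP => /(congr1 (fun F : L => F (fun=> 1) t0)) /eqP; rewrite oner_eq0.
Qed.

HB.instance Definition _ := GRing.Zmodule_isNzRing.Build L
  endo_mulA endo_mul1 endo_mulr1 endo_mulDl endo_mulDr endo_one_neq0.

Lemma endo_scaleA a b F : endo_scale a (endo_scale b F) = endo_scale (a * b) F.
Proof. by apply: endo_eq => f x; rewrite /= mulrA. Qed.
Lemma endo_scale1 : left_id 1 endo_scale.
Proof. by move=> F; apply: endo_eq => f x; rewrite /= mul1r. Qed.
Lemma endo_scaleDr : right_distributive endo_scale +%R.
Proof. by move=> a F G; apply: endo_eq => f x; rewrite /= mulrDr. Qed.
Lemma endo_scaleDl F : {morph endo_scale^~ F : a b / a + b}.
Proof. by move=> a b; apply: endo_eq => f x; rewrite /= mulrDl. Qed.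

HB.instance Definition _ := GRing.Zmodule_isLmodule.Build R L
  endo_scaleA endo_scale1 endo_scaleDr endo_scaleDl.

Lemma endo_scaleAl (a : R) (F G : L) : a *: (F * G) = (a *: F) * G.
Proof. exact: endo_eq. Qed.
HB.instance Definition _ := GRing.Lmodule_isLalgebra.Build R L endo_scaleAl.

Lemma endo_scaleAr (a : R) (F G : L) : a *: (F * G) = F * (a *: G).
Proof. by apply: endo_eq => f x; rewrite /= endoZ. Qed.
HB.instance Definition _ := GRing.Lalgebra_isAlgebra.Build R L endo_scaleAr.

Lemma endo_sumE (I : Type) (r : seq I) (F : I -> L) f x :
  (\sum_(i <- r) F i) f x = \sum_(i <- r) F i f x.
Proof. by elim: r => [|i r IH]; rewrite ?big_nil ?big_cons //= IH. Qed.

End LinearEndomorphisms.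

Section WeightedCompositions.
Variables (R : comNzRingType) (T : Type) (t0 : T).

Lemma linear_wcomp (c : T -> bool) (phi : T -> T) :
  linear_on (fun (f : T -> R) x => (c x)%:R * f (phi x)).
Proof. by move=> k f g; apply/funext => x; rewrite mulrDr mulrCA. Qed.

Definition wcomp c phi : endo R t0 := Endo t0 (linear_wcomp c phi).

Lemma wcompE c phi f x : wcomp c phi f x = (c x)%:R * f (phi x).
Proof. by []. Qed.

Lemma wcomp_mul c phi d psi :
  wcomp c phi * wcomp d psi = wcomp (fun x => c x && d (phi x)) (psi \o phi).
Proof.
apply: endo_eq => f x /=.
by case: (c x); case: (d (phi x)); rewrite ?mul1r ?mul0r.
Qed.

Lemma eq_wcomp (c d : T -> bool) (phi psi : T -> T) :
  c =1 d -> (forall x, c x -> phi x = psi x) -> wcomp c phi = wcomp d psi.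
Proof.
move=> cd phipsi; apply: endo_eq => f x; rewrite !wcompE -cd.
by case cx: (c x); rewrite ?mul0r // phipsi.
Qed.

Lemma wcomp_false phi : wcomp (fun=> false) phi = 0.
Proof. by apply: endo_eq => f x; rewrite wcompE mul0r. Qed.

Lemma wcompU c d phi :
  wcomp (fun x => c x || d x) phi
  = wcomp c phi + wcomp d phi - wcomp (fun x => c x && d x) phi.
Proof.
apply: endo_eq => f x /=.
by case: (c x); case: (d x);
  rewrite /= ?mulr1n ?mulr0n ?mul1r ?mul0r ?subr0 ?addr0 ?add0r ?addrK.
Qed.

End WeightedCompositions.

Arguments wcomp {R T t0}.

Lemma sum_NoDup_supp1 (M : nmodType) (I : Type) (r : seq I) (F : I -> M) b :
  List.NoDup r -> (forall a, a <> b -> F a = 0) ->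
  \sum_(a <- r) F a = if `[< List.In b r >] then F b else 0.
Proof.
move=> + Fb; elim: r => [|a r IH] /=; first by rewrite big_nil asboolF.
move=> /List.NoDup_cons_iff [ar /IH sumr]; rewrite big_cons sumr.
have [<-|ab] := pselect (a = b); first by rewrite (asboolF ar) addr0 asboolT //; left.
rewrite Fb // add0r; congr (if _ then _ else _).
by apply: asbool_equiv_eq; split => [?|[/ab []|//]]; right.
Qed.

Lemma drop_ohead (T : Type) (s : seq T) n a :
  ohead (drop n s) = Some a -> drop n s = a :: drop n.+1 s.
Proof.
rewrite -addn1 addnC -drop_drop.
by case: (drop n s) => [|b t] //= [->]; rewrite drop0.
Qed.

Lemma dependent_choice_seq (T : Type) (P : seq T -> Prop) :
  P [::] -> (forall w, P w -> exists a, P (rcons w a)) ->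
  exists l : nat -> T, forall n, P (map l (iota 0 n)).
Proof.
move=> P0 Pnext; have [a0 _] := Pnext _ P0.
have /choice [next Pnext'] : forall w, exists a, P w -> P (rcons w a).
  by move=> w; have [/Pnext [a Pa]|] := pselect (P w); [exists a | exists a0].
pose fix word n := if n is n.+1 then rcons (word n) (next (word n)) else [::].
exists (fun i => next (word i)) => n.
have -> : map (fun i => next (word i)) (iota 0 n) = word n.
  elim: n => [//|n IH]; rewrite (_ : word n.+1 = rcons (word n) (next (word n))) //.
  by rewrite -[n.+1]addn1 iotaD map_cat IH cats1.
by elim: n => [//|n IH]; exact: Pnext'.
Qed.

Definition segment (T : Type) (l : nat -> T) n m := map l (iota n (m - n)).

Lemma segment_cat (T : Type) (l : nat -> T) n k m : (n <= k <= m)%N ->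
  segment l n m = segment l n k ++ segment l k m.
Proof.
move=> /andP[nk km]; rewrite /segment -map_cat -{2}(subnKC nk) -iotaD.
by congr (map l (iota n _)); lia.
Qed.

Lemma segment_cons (T : Type) (l : nat -> T) n m : (n < m)%N ->
  segment l n m = l n :: segment l n.+1 m.
Proof. by move=> nm; rewrite /segment -subnSK. Qed.

Lemma filter_setI (X : Type) (U : set_system X) (Y Z : set X) :
  Filter U -> U (Y `&` Z) <-> U Y /\ U Z.
Proof.
move=> Ufilter; split => [UYZ|[UY UZ]]; last exact: filterI.
by split; apply: filterS UYZ => x [].
Qed.

Lemma ultra_setU (X : Type) (U : set_system X) (Y Z : set X) :
  UltraFilter U -> U (Y `|` Z) <-> U Y \/ U Z.
Proof.
move=> Uultra; split => [UYZ|[UY|UZ]]; last 2 first.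
- by apply: filterS UY => x; left.
- by apply: filterS UZ => x; right.
have [|UnY] := in_ultra_setVsetC Y Uultra; first by left.
by right; apply: filterS (filterI UnY UYZ) => x [nYx [|]].
Qed.

Section Words.
Variables (V Ed Alph : Type) (src rng : Ed -> V) (lab : Ed -> Alph).
Local Notation rs := (rset src rng lab).
Local Notation linked := (linked src rng).

Lemma linked_cat e0 l1 e1 l2 :
  linked e0 (l1 ++ e1 :: l2)
  <-> [/\ linked e0 l1, rng (last e0 l1) = src e1 & linked e1 l2].
Proof.
elim: l1 e0 => [|e l1 IH] e0 /=; first by split => [[]|[]].
by rewrite IH; split => [[? []]|[[]]].
Qed.

Lemma rset_cat (A : set V) u w : rs (rs A u) w = rs A (u ++ w).
Proof.
case: u => [//|a u]; case: w => [|b w]; first by rewrite cats0.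
apply/seteqP; split => x /=.
- move=> [f0 [l2 [Pl2 [[<- <-] [[e0 [l1 [Pl1 [[<- <-] [Ae0 e1f0]]]]] <-]]]]].
  exists e0, (l1 ++ f0 :: l2).
  by rewrite /is_path linked_cat last_cat map_cat.
- move=> [e0 [l [Pl [[<- Ml] [Ae0 <-]]]]].
  have Ml1 : map lab (take (size u) l) = u.
    by rewrite map_take Ml take_size_cat.
  have := congr1 (drop (size u)) Ml; rewrite drop_size_cat // -map_drop.
  have El := cat_take_drop (size u) l.
  case: (drop (size u) l) El => [//|f0 l2] El [<- Ml2].
  move: Pl; rewrite /is_path -El linked_cat => -[Pl1 e1f0 Pl2].
  exists f0, l2; split=> //; split; first by rewrite Ml2.
  split; last by rewrite -El last_cat.
  by exists e0, (take (size u) l); rewrite /= Ml1.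
Qed.

Lemma rsetS (A C : set V) w : A `<=` C -> rs A w `<=` rs C w.
Proof.
case: w => [//|a w] AC x /= [e0 [l [Pl [Ml [Ae0 <-]]]]].
by exists e0, l; do !split => //; exact: AC.
Qed.

Lemma rset0 w : rs set0 w = set0.
Proof. by case: w => [//|a w]; apply/seteqP; split => x // [e0 [l [_ [_ []]]]]. Qed.

Lemma rsetU (A C : set V) w : rs (A `|` C) w = rs A w `|` rs C w.
Proof.
case: w => [//|a w]; apply/seteqP; split => x /=.
- by move=> [e0 [l [Pl [Ml [[Ae0|Ce0] <-]]]]]; [left|right]; exists e0, l.
- by case=> -[e0 [l [Pl [Ml [Xe0 <-]]]]]; exists e0, l; do !split => //;
    [left|right].
Qed.

Lemma rword_nil : rword src rng lab [::] = setT.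
Proof. by []. Qed.

Lemma rset_notLstar (A : set V) w : ~ in_Lstar src rng lab w -> rs A w = set0.
Proof.
move=> wL; apply/seteqP; split => x //; case: w wL => [|a w] wL /=.
  by case: wL; left.
by move=> [e0 [l [Pl [Ml _]]]]; case: wL; right; exists e0, l.
Qed.

End Words.

Arguments rset : simpl never.

Section NormalLabelledSpace.
Variables (V Ed Alph : Type) (src rng : Ed -> V) (lab : Ed -> Alph).
Variable B : set (set V).
Hypothesis nls : normal_labelled_space src rng lab B.
Local Notation rs := (rset src rng lab).
Local Notation rw := (rword src rng lab).

Lemma nls_setI (A C : set V) : B A -> B C -> B (A `&` C).
Proof. by case: nls => -[+ _ _ _] _ _; apply. Qed.

Lemma nls_set0 (A : set V) : B A -> B set0.
Proof. by case: nls => _ _ BD BA; rewrite -(setDv A); exact: BD. Qed.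

Lemma nls_rset (A : set V) w : B A -> B (rs A w).
Proof.
move=> BA; have [wL|wL] := pselect (in_Lstar src rng lab w).
  by case: nls => -[_ _ _ +] _ _; apply.
by rewrite rset_notLstar //; exact: nls_set0 BA.
Qed.

Lemma nls_rword (A : set V) w : B A -> w <> [::] -> B (rw w).
Proof.
move=> BA w0; have [wL|wL] := pselect (in_Lstar src rng lab w).
  by case: nls => -[_ _ + _] _ _; apply.
by rewrite /rword rset_notLstar //; exact: nls_set0 BA.
Qed.

Lemma nls_rwordI (A : set V) w : B A -> B (A `&` rw w).
Proof.
case: w => [|a w] BA; first by rewrite rword_nil setIT.
by apply: nls_setI => //; exact: nls_rword BA _.
Qed.

Lemma nls_rsetI (A C : set V) w :
  B A -> B C -> rs (A `&` C) w = rs A w `&` rs C w.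
Proof.
case: w => [//|a w] BA BC; have [wL|wL] := pselect (in_Lstar src rng lab (a :: w)).
  by case: nls => _ + _; apply.
by rewrite !rset_notLstar // setI0.
Qed.

(** * Consequences of the defining relations *)

Section WordConjugation.
Variables (R : comNzRingType) (X : algType R) (p : set V -> X) (s ss : Alph -> X).
Hypothesis rep : LLPA_rep src rng lab B p s ss.

Lemma s_word_conj A w : B A -> s_word_star ss w * p A * s_word s w = p (rs A w).
Proof.
case: rep => pIU [_ pS] sSs _ _.
elim: w A => [|a w IH] A BA.
  by rewrite /s_word_star /s_word !big_nil mul1r mulr1.
have conj_a : ss a * p A * s a = p (rs A [:: a]).
  have BAa : B (rs A [:: a]) by exact: nls_rset.
  rewrite (proj2 (pS A a BA)) -mulrA (proj1 (sSs a a)) -(proj1 (pIU _ _ BAa _)).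
    by rewrite setIidl //; exact: rsetS.
  exact: nls_rword BA _.
rewrite /s_word_star /s_word rev_cons big_rcons big_cons /=.
rewrite -/(s_word_star ss w) -/(s_word s w).
have -> : s_word_star ss w * ss a * p A * (s a * s_word s w)
        = s_word_star ss w * (ss a * p A * s a) * s_word s w by rewrite !mulrA.
by rewrite conj_a IH ?rset_cat //; exact: nls_rset.
Qed.

Lemma s_word_starK A w : B A -> w <> [::] -> s_word_star ss w * s_word s w = p (rw w).
Proof.
case: w => [//|a w] BA _; case: rep => _ _ sSs _ _.
rewrite /s_word_star /s_word rev_cons big_rcons big_cons /=.
rewrite -/(s_word_star ss w) -/(s_word s w).
have -> : s_word_star ss w * ss a * (s a * s_word s w)
        = s_word_star ss w * (ss a * s a) * s_word s w by rewrite !mulrA.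
rewrite (proj1 (sSs a a)) s_word_conj; first by rewrite /rword rset_cat.
exact: nls_rword BA _.
Qed.

Lemma s_word_proj A w : B A -> s_word_star ss w * s_word s w * p A = p (A `&` rw w).
Proof.
case: w => [|a w] BA.
  by rewrite /s_word_star /s_word !big_nil !mul1r rword_nil setIT.
have Bw : B (rw (a :: w)) by exact: nls_rword BA _.
case: rep => pIU _ _ _ _.
by rewrite (s_word_starK BA) // -(proj1 (pIU _ _ Bw BA)) setIC.
Qed.

Lemma proj_s_word A w : B A -> p A * (s_word_star ss w * s_word s w) = p (A `&` rw w).
Proof.
case: w => [|a w] BA.
  by rewrite /s_word_star /s_word !big_nil !mulr1 rword_nil setIT.
have Bw : B (rw (a :: w)) by exact: nls_rword BA _.
case: rep => pIU _ _ _ _.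
by rewrite (s_word_starK BA) // -(proj1 (pIU _ _ BA Bw)).
Qed.

Lemma s_word_sandwich A u w : B A ->
  s_word_star ss u * (s_word s u * p A * s_word_star ss w) * s_word s w
  = p (A `&` rw u `&` rw w).
Proof.
move=> BA.
have -> : s_word_star ss u * (s_word s u * p A * s_word_star ss w) * s_word s w
        = s_word_star ss u * s_word s u * p A * (s_word_star ss w * s_word s w).
  by rewrite !mulrA.
by rewrite s_word_proj // proj_s_word //; exact: nls_rwordI.
Qed.

End WordConjugation.

(** * Traces *)

Definition lattice_char (chi : set V -> bool) :=
  [/\ forall C D, B C -> B D -> chi (C `&` D) = chi C && chi D,
      forall C D, B C -> B D -> chi (C `|` D) = chi C || chi D
    & chi set0 = false].

Lemma lattice_char_at v w : lattice_char (fun C => `[< rs C w v >]).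
Proof.
split=> [C D BC BD|C D _ _|]; last by rewrite rset0 asboolF.
  by rewrite nls_rsetI // -asbool_and.
by rewrite rsetU -asbool_or.
Qed.

Lemma lattice_char_ultra (X : Type) (U : set_system X) (S : set V -> set X) :
  UltraFilter U ->
  (forall C D, B C -> B D -> S (C `&` D) = S C `&` S D) ->
  (forall C D, S (C `|` D) = S C `|` S D) -> S set0 = set0 ->
  lattice_char (fun C => `[< U (S C) >]).
Proof.
move=> Uultra SI SU S0; split=> [C D BC BD|C D _ _|].
- by rewrite SI // -asbool_and; apply/asbool_equiv_eq/filter_setI.
- by rewrite SU -asbool_or; apply/asbool_equiv_eq/ultra_setU.
- by rewrite S0 asboolF //; exact: filter_not_empty.
Qed.

Lemma lattice_char_rset chi w :
  lattice_char chi -> lattice_char (fun C => chi (rs C w)).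
Proof.
case=> chiI chiU chi0; split=> [C D BC BD|C D BC BD|]; last by rewrite rset0.
  by rewrite nls_rsetI // chiI //; exact: nls_rset.
by rewrite rsetU chiU //; exact: nls_rset.
Qed.

(* [letter x n] is [None] once a finite word has ended. *)
Record trace := Trace {letter : nat -> option Alph; chi : nat -> set V -> bool}.

(* The third condition (no regular set holds at the end of a finite word) is
   what makes the Cuntz-Krieger relation (v) hold. *)
Definition admissible (x : trace) :=
  [/\ forall n a, letter x n = Some a -> chi x n = (fun C => chi x n.+1 (rs C [:: a])),
      forall n, lattice_char (chi x n),
      forall n, letter x n = None ->
        forall D, regular src rng lab B D -> chi x n D = false
    & forall n a, letter x n = Some a -> chi x n.+1 (rw [:: a])].

Definition shift (x : trace) := Trace (fun n => letter x n.+1) (fun n => chi x n.+1).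

Definition prepend a (x : trace) :=
  Trace (fun n => if n is n.+1 then letter x n else Some a)
        (fun n => if n is n.+1 then chi x n else fun C => chi x 0%N (rs C [:: a])).

Lemma admissible_shift x : admissible x -> admissible (shift x).
Proof.
by case=> xS xchar xN xr; split=> n; [exact: xS|exact: xchar|exact: xN|exact: xr].
Qed.

Lemma admissible_prepend a x :
  admissible x -> chi x 0%N (rw [:: a]) -> admissible (prepend a x).
Proof.
case=> xS xchar xN xr xa; split=> -[|n] /=.
- by move=> b [<-].
- exact: xS.
- exact: lattice_char_rset (xchar 0%N).
- exact: xchar.
- by [].
- exact: xN.
- by move=> b [<-].
- exact: xr.
Qed.

Lemma shift_prepend a x : shift (prepend a x) = x.
Proof. by case: x. Qed.

Lemma prepend_shift a x :
  admissible x -> letter x 0%N = Some a -> prepend a (shift x) = x.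
Proof.
case: x => l c [/= xS _ _ _] l0; congr Trace; apply/funext => -[|n] //=.
by rewrite (xS 0%N a l0).
Qed.

Lemma exists_trace_singular_vertex (A : set V) w v :
  rs A w v -> (forall D, regular src rng lab B D -> ~ D v) ->
  exists x, admissible x /\ chi x 0%N A.
Proof.
move=> Awv vreg.
exists (Trace (fun n => ohead (drop n w)) (fun n C => `[< rs C (drop n w) v >])).
split; last by rewrite /= drop0; exact/asboolP.
split=> n /=.
- move=> a wa; apply/funext => C.
  by rewrite (drop_ohead wa) rset_cat.
- exact: lattice_char_at.
- by case: (drop n w) => // _ D /vreg Dv; exact: asboolF.
- move=> a wa; apply/asboolP.
  have : rs A (take n w ++ a :: drop n.+1 w) v.
    by rewrite -(drop_ohead wa) cat_take_drop.
  by rewrite -cat1s -!rset_cat; apply: rsetS; apply: rsetS.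
Qed.

Lemma exists_trace_infinite_word (A : set V) (l : nat -> Alph) (u : nat -> V) :
  (forall m, rs A (segment l 0 m) (u m)) -> exists x, admissible x /\ chi x 0%N A.
Proof.
move=> Alu; have [U [Uultra evU]] := ultraFilterLemma eventually_filter.
have Uge n : U [set m | (n <= m)%N] by apply: evU; exists n.
(* An ultrafilter, rather than "for all large m", makes [chi n] preserve
   unions. *)
pose S n C := [set m | (n <= m)%N /\ rs C (segment l n m) (u m)].
exists (Trace (fun n => Some (l n)) (fun n C => `[< U (S n C) >])).
split; last by apply/asboolP; apply: filterS (Uge 0%N) => m _; split.
split=> n /=.
- move=> a [<-]; apply/funext => C; apply/asbool_equiv_eq.
  have -> : S n.+1 (rs C [:: l n]) = S n C `&` [set m | (n < m)%N].
    apply/seteqP; split=> m; rewrite /S /=.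
      move=> [nm Cm]; rewrite segment_cons // -cat1s -rset_cat.
      by do !split => //; exact: ltnW.
    move=> [[_ Cm] nm]; split=> //.
    by move: Cm; rewrite segment_cons // -cat1s -rset_cat.
  by rewrite filter_setI; split=> [UC|[]//]; split=> //; exact: Uge.
- apply: lattice_char_ultra => // [C D BC BD|C D|]; apply/seteqP; split=> m;
    rewrite /S /=.
  + by rewrite nls_rsetI // => -[nm []].
  + by rewrite nls_rsetI // => -[[nm Cm] [_ Dm]].
  + by rewrite rsetU => -[nm [Cm|Dm]]; [left|right].
  + by rewrite rsetU => -[[nm Cm]|[nm Dm]]; split=> //; [left|right].
  + by rewrite rset0 => -[].
  + by [].
- by [].
- move=> a [<-]; apply/asboolP; apply: filterS (Uge n.+1) => m nm; split=> //.
  have := Alu m.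
  rewrite (@segment_cat _ l 0 n m) ?leq0n ?(ltnW nm) // (segment_cons l nm).
  by rewrite -cat1s -!rset_cat; apply: rsetS; apply: rsetS.
Qed.

Lemma exists_admissible_trace (A : set V) :
  B A -> A !=set0 -> exists x, admissible x /\ chi x 0%N A.
Proof.
move=> BA [v Av].
have [[w [y [Awy yreg]]]|] :=
  pselect (exists w y, rs A w y /\ forall D, regular src rng lab B D -> ~ D y).
  exact: exists_trace_singular_vertex Awy yreg.
move=> no_singular.
(* Every vertex reachable from A lies in a regular set, which emits some letter. *)
have grow w : rs A w !=set0 -> exists a, rs A (rcons w a) !=set0.
  move=> [y Awy]; have [D [[BD _ Dout] Dy]] : exists D, regular src rng lab B D /\ D y.
    apply: contrapT => noD; apply: no_singular; exists w, y; split=> // D regD Dy.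
    by apply: noD; exists D.
  have BC : B (rs A w `&` D) by apply: nls_setI => //; exact: nls_rset.
  have Cne : rs A w `&` D != set0 by apply/set0P; exists y.
  have [/set0P [a /set0P [z Caz]] _] := Dout _ BC Cne (@subIsetr _ _ _).
  by exists a, z; rewrite -cats1 -rset_cat; apply: rsetS Caz; exact: subIsetl.
have [l Al] :=
  dependent_choice_seq (P := fun w => rs A w !=set0) (ex_intro _ v Av) grow.
have /choice [u Alu] : forall m, exists y, rs A (segment l 0 m) y.
  by move=> m; rewrite /segment subn0; exact: Al.
exact: exists_trace_infinite_word Alu.
Qed.

(** * The trace representation *)

Section TraceRepresentation.
Variable R : comNzRingType.

Definition admissibleb x := `[< admissible x >].
Definition empty_trace := Trace (fun=> None) (fun _ _ => false).
Local Notation op := (endo R empty_trace).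

Definition proj_op A : op := wcomp (fun x => admissibleb x && chi x 0%N A) id.
Definition shift_op a : op :=
  wcomp (fun x => admissibleb x && `[< letter x 0%N = Some a >]) shift.
Definition prepend_op a : op :=
  wcomp (fun x => admissibleb x && chi x 0%N (rw [:: a])) (prepend a).

Lemma proj_opI A C : B A -> B C -> proj_op (A `&` C) = proj_op A * proj_op C.
Proof.
move=> BA BC; rewrite wcomp_mul; apply: eq_wcomp => // x.
by rewrite /admissibleb; case: asboolP => //= -[_ /(_ 0%N) [-> // _ _] _ _].
Qed.

Lemma proj_opU A C : B A -> B C ->
  proj_op (A `|` C) = proj_op A + proj_op C - proj_op (A `&` C).
Proof.
move=> BA BC; rewrite proj_opI // wcomp_mul -wcompU; apply: eq_wcomp => // x.
by rewrite /admissibleb; case: asboolP => //= -[_ /(_ 0%N) [_ -> // _] _ _].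
Qed.

Lemma proj_op0 : proj_op set0 = 0.
Proof.
rewrite -(@wcomp_false R _ empty_trace id); apply: eq_wcomp => // x.
by rewrite /admissibleb; case: asboolP => //= -[_ /(_ 0%N) [_ _ ->] _ _].
Qed.

Lemma proj_op_shift A a :
  proj_op A * shift_op a = shift_op a * proj_op (rs A [:: a]).
Proof.
rewrite !wcomp_mul; apply: eq_wcomp => // x /=; rewrite /admissibleb.
case: asboolP => //= xa; case: asboolP => [xa0|_]; last by rewrite andbF.
rewrite asboolT /=; last exact: admissible_shift.
by case: xa => /(_ 0%N a xa0) -> _ _ _; rewrite andbT.
Qed.

Lemma prepend_op_proj A a :
  prepend_op a * proj_op A = proj_op (rs A [:: a]) * prepend_op a.
Proof.
rewrite !wcomp_mul; apply: eq_wcomp => // x /=; rewrite /admissibleb.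
case: asboolP => //= xa; case xra: (chi x 0%N (rw [:: a])); last by rewrite andbF.
by rewrite asboolT ?andbT //; exact: admissible_prepend.
Qed.

Lemma prepend_op_shift a : prepend_op a * shift_op a = proj_op (rw [:: a]).
Proof.
rewrite wcomp_mul; apply: eq_wcomp => [x|x _]; last exact: shift_prepend.
rewrite /admissibleb; case: asboolP => //= xa; case xra: (chi x 0%N (rw [:: a])) => //=.
by rewrite !asboolT //; exact: admissible_prepend.
Qed.

Lemma prepend_op_shift_neq a b : b <> a -> prepend_op b * shift_op a = 0.
Proof.
move=> ba; rewrite wcomp_mul -(@wcomp_false R _ empty_trace (shift \o prepend b)).
by apply: eq_wcomp => // x; rewrite [`[< Some b = Some a >]]asboolF ?andbF // => -[].
Qed.

Lemma shift_opK a : shift_op a * prepend_op a * shift_op a = shift_op a.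
Proof.
rewrite -mulrA prepend_op_shift wcomp_mul; apply: eq_wcomp => // x.
rewrite /admissibleb; case: asboolP => //= xa; case: asboolP => //= xa0.
by rewrite asboolT; [case: xa => _ _ _ /(_ 0%N a xa0) | exact: admissible_shift].
Qed.

Lemma prepend_opK a : prepend_op a * shift_op a * prepend_op a = prepend_op a.
Proof.
by rewrite prepend_op_shift wcomp_mul; apply: eq_wcomp => // x; rewrite andbb.
Qed.

Lemma shift_proj_prepend_op a C : shift_op a * proj_op C * prepend_op a
  = wcomp (fun x => admissibleb x && `[< letter x 0%N = Some a >] && chi x 1%N C) id.
Proof.
rewrite !wcomp_mul; apply: eq_wcomp => x /=; rewrite /admissibleb.
  case: (asboolP (admissible x)) => //= xa.
  case: (asboolP (letter x 0%N = Some a)) => //= xa0.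
  rewrite asboolT /=; last exact: admissible_shift.
  by case: xa => _ _ _ /(_ 0%N a xa0) ->; rewrite andbT.
by move=> /andP[/andP[/andP[/asboolP xa /asboolP xa0] _] _]; exact: prepend_shift.
Qed.

Lemma proj_op_CK A l : in_Breg src rng lab B A -> List.NoDup l ->
  (forall a, List.In a l <-> out_labels src rng lab A a) ->
  proj_op A = \sum_(a <- l) shift_op a * proj_op (rs A [:: a]) * prepend_op a.
Proof.
move=> regA lND lA; under eq_bigr do rewrite shift_proj_prepend_op.
apply: endo_eq => f x; rewrite endo_sumE wcompE /admissibleb.
under eq_bigr do rewrite wcompE /admissibleb.
case: asboolP => /= [[xS xchar xN _]|_]; last first.
  by rewrite mul0r big1 // => a _; rewrite mul0r.
case l0: (letter x 0%N) => [b|].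
  rewrite (sum_NoDup_supp1 (b := b) lND) => [|a ab]; last first.
    by rewrite [`[< Some b = Some a >]]asboolF ?mul0r // => -[/esym].
  rewrite [`[< Some b = Some b >]]asboolT //= (xS 0%N b l0).
  case: (pselect (List.In b l)) => bl; first by rewrite asboolT.
  have -> : rs A [:: b] = set0 by apply/eqP/negbNE/negP => ?; apply/bl/lA.
  by rewrite asboolF //; case: (xchar 1%N) => _ _ ->; rewrite mul0r.
rewrite big1 => [|a _]; last by rewrite [`[< None = Some a >]]asboolF ?mul0r.
case: regA => [regA|->]; first by rewrite xN // mul0r.
by case: (xchar 0%N) => _ _ ->; rewrite mul0r.
Qed.

Lemma trace_rep : LLPA_rep src rng lab B proj_op shift_op prepend_op.
Proof.
split.
- by move=> A C BA BC; split; [exact: proj_opI | exact: proj_opU].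
- split; first exact: proj_op0.
  by move=> A a _; split; [exact: proj_op_shift | exact: prepend_op_proj].
- by move=> a b; split; [exact: prepend_op_shift | exact: prepend_op_shift_neq].
- by move=> a; split; [exact: shift_opK | exact: prepend_opK].
- by move=> A regA l; exact: proj_op_CK.
Qed.

Lemma LLPA_eq0_sum_proj n (A : 'I_n -> set V) (c : 'I_n -> R) :
  (forall i, B (A i)) -> (forall i, A i != set0) ->
  (forall i j, i != j -> A i `&` A j = set0) ->
  LLPA_eq0 src rng lab B (fun X p s ss => \sum_(i < n) c i *: p (A i)) ->
  forall i, c i = 0.
Proof.
move=> BA A0 Adisj eq0 i; have /set0P Ai0 := A0 i.
have [x [xa xAi]] := exists_admissible_trace (BA i) Ai0.
have := congr1 (fun F : op => F (fun=> 1) x) (eq0 _ _ _ _ trace_rep).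
rewrite /= endo_sumE (bigD1 i) //= big1 => [|j ji].
  by rewrite /admissibleb asboolT // xAi mulr1 mulr1 addr0.
rewrite /admissibleb asboolT //.
case: xa => _ /(_ 0%N) [chiI _ chi0] _ _.
move: chi0; rewrite -(Adisj i j) 1?eq_sym // chiI // xAi => /= ->.
by rewrite !mul0r mulr0.
Qed.

Lemma LLPA_eq0_scale_proj (r : R) A : B A -> A != set0 ->
  LLPA_eq0 src rng lab B (fun X p s ss => r *: p A) -> r = 0.
Proof.
move=> BA A0 eq0.
apply: (@LLPA_eq0_sum_proj 1 (fun=> A) (fun=> r) _ _ _ _ ord0) => //.
  by move=> i j; rewrite (ord1 i) (ord1 j) eqxx.
by move=> X p s ss rep; rewrite big_ord1; exact: eq0 rep.
Qed.

End TraceRepresentation.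

End NormalLabelledSpace.

Theorem lemma4p5 (V Ed Alph : Type) (src rng : Ed -> V) (lab : Ed -> Alph)
    (B : set (set V)) (R : comNzRingType) :
  (forall a : Alph, exists e : Ed, lab e = a) ->
  normal_labelled_space src rng lab B ->
  [/\
   (* (i) *)
   (forall A, B A -> A != set0 ->
      ~ @LLPA_eq0 V Ed Alph src rng lab R B (fun X p s ss => p A)),
   (* (ii) *)
   (forall (r : R) A, B A ->
      @LLPA_eq0 V Ed Alph src rng lab R B (fun X p s ss => r *: p A) -> r = 0 \/ A = set0),
   (* (iii) *)
   (forall (n : nat) (A : 'I_n -> set V) (c : 'I_n -> R),
      (forall i, B (A i)) -> (forall i, A i != set0) ->
      (forall i j, i != j -> A i `&` A j = set0) ->
      @LLPA_eq0 V Ed Alph src rng lab R B (fun X p s ss => \sum_(i < n) c i *: p (A i)) ->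
      forall i, c i = 0)
   &
   (* (iv) *)
   (forall (alpha beta : seq Alph) A (r : R),
      in_Lstar src rng lab alpha -> in_Lstar src rng lab beta -> B A ->
      A `&` rword src rng lab alpha `&` rword src rng lab beta != set0 ->
      r != 0 ->
      ~ @LLPA_eq0 V Ed Alph src rng lab R B
          (fun X p s ss => r *: (s_word s alpha * p A * s_word_star ss beta)))].
Proof.
move=> _ nls; split.
- move=> A BA A0 eq0; suff : (1 : R) = 0 by apply/eqP; exact: oner_neq0.
  apply: (LLPA_eq0_scale_proj nls BA A0) => X p s ss rep.
  by rewrite scale1r; exact: eq0 rep.
- move=> r A BA eq0; have [->|A0] := eqVneq A set0; [by right | left].
  by apply: (LLPA_eq0_scale_proj nls BA A0) => X p s ss /eq0.
- exact: LLPA_eq0_sum_proj.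
- move=> u w A r _ _ BA D0 r0 eq0; apply/(negP r0)/eqP.
  have BD : B (A `&` rword src rng lab u `&` rword src rng lab w).
    by apply: nls_rwordI => //; exact: nls_rwordI.
  apply: (LLPA_eq0_scale_proj nls BD D0) => X p s ss rep.
  rewrite -(s_word_sandwich nls rep u w BA) scalerAl scalerAr.
  by rewrite (eq0 _ _ _ _ rep) mulr0 mul0r.
Qed.
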